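(* Let $q$ be a prime power and $r$ odd. In any hyperbolic avsp $\{S_1,\dots,S_{q^{\frac{r+1}{2}}}\}$ of ${\rm PG}(r+1,q)$ with respect to a hyperplane $H$, any two distinct members $S_i,S_j$ meet in exactly one point, and $\Pi_i=S_i\cap H$, $\Pi_j=S_j\cap H$ meet in exactly one point. Consequently, if $r\equiv -1\pmod 4$, no hyperbolic avsp of ${\rm PG}(r+1,q)$ exists.
   Context: Affine vector space partition (avsp): given a hyperplane $H$ of ${\rm PG}(r+1,q)$, an avsp (with respect to $H$) is a set $\mathcal P$ of subspaces, none contained in $H$, such that every point of ${\rm PG}(r+1,q)\setminus H$ lies in exactly one member of $\mathcal P$. Hyperbolic avsp ($r$ odd): an avsp $\mathcal P=\{S_1,\dots,S_N\}$ of ${\rm PG}(r+1,q)$ with respect to $H$, where $N=q^{\frac{r+1}{2}}$ and every $S_i$ is a $\frac{r+1}{2}$-dimensional projective subspace, such that the sets $\Pi_i=S_i\cap H$ are $N$ generators (i.e. $\frac{r-1}{2}$-dimensional subspaces contained in the quadric) of a non-degenerate hyperbolic quadric $\mathcal Q^+(r,q)\subset H$ with: (1) each $\Pi_i$ disjoint from a fixed generator $\Pi$ of $\mathcal Q^+(r,q)$; (2) distinct $S_i,S_j$ meet in at most one point, and distinct $\Pi_i,\Pi_j$ meet in at most one point; (3) if $|\Pi_i\cap\Pi_j|=1$, then $\langle S_i,S_j\rangle\cap\mathcal Q^+(r,q)=\mathcal Q^+(r,q)$. *)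

(* projective geometry PG(r+1,q) modelled on the vector space
   'rV[F]_(r.+2) over a finite field F with #|F| = q.  Projective subspaces of
   projective dimension d are vector subspaces ({vspace _}) of dimension d+1;
   points are 1-dimensional subspaces. *)
From HB Require Import structures.
From mathcomp Require Import all_boot all_order all_algebra.
Set Implicit Arguments. Unset Strict Implicit. Unset Printing Implicit Defensive.
Import Order.TTheory GRing.Theory.
Local Open Scope ring_scope.

Section Defs.
Variables (F : finFieldType) (n : nat).
Local Notation vT := 'rV[F]_n.

(* The hyperbolic quadratic form in canonical form w.r.t. the basis b of H:
   Q(sum x_i b_i) = x_0 x_1 + x_2 x_3 + ... + x_(m-2) x_(m-1). *)
Definition hypQ (m : nat) (b : m.-tuple vT) (v : vT) : F :=
  let x := [seq coord b i v | i <- enum 'I_m] in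
  \sum_(i < m | ~~ odd i) x`_i * x`_i.+1.

Definition is_generator (H : {vspace vT}) (m : nat) (b : m.-tuple vT)
    (U : {vspace vT}) : Prop :=
  (U <= H)%VS /\ \dim U = m./2 /\ (forall v, v \in U -> hypQ b v = 0).

(* Hyperbolic avsp of PG(r+1,q) (n = r+2) w.r.t. the hyperplane H, the
   non-degenerate hyperbolic quadric of H being given by the basis b of H
   (in which its form is canonical), the fixed generator being Pi, and the
   members being S i (i < N = q^((r+1)/2)); Pi_i = S i :&: H. *)
Definition hyperbolic_avsp (r : nat) (H : {vspace vT}) (b : r.+1.-tuple vT)
    (Pi : {vspace vT}) (N : nat) (S : 'I_N -> {vspace vT}) : Prop :=
  n = r.+2 /\ \dim H = r.+1 /\ basis_of H b /\ is_generator H b Pi /\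
  (forall i j, S i = S j -> i = j) /\
  (forall i, ~~ (S i <= H)%VS) /\
  (forall v, v \notin H -> exists! i, v \in S i) /\
  (forall i, \dim (S i) = (r.+1)./2.+1 /\ is_generator H b (S i :&: H)%VS
             /\ (S i :&: H :&: Pi = 0)%VS) /\
  (forall i j, i != j ->
     (\dim (S i :&: S j) <= 1)%N /\
     (\dim ((S i :&: H) :&: (S j :&: H)) <= 1)%N /\
     (\dim ((S i :&: H) :&: (S j :&: H)) = 1%N ->
        forall v, v \in H -> hypQ b v = 0 -> v \in (S i + S j)%VS)).

End Defs.

(* Two members S_i, S_j of the avsp are (k+1)-dimensional subspaces (k = (r+1)/2)
   of a (2k+1)-dimensional space, so they meet nontrivially; since the avsp
   partitions the points off H, they meet inside H, and condition (2) forces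
   both S_i :&: S_j and Pi_i :&: Pi_j to be points.

   For the congruence, let P, P1, P2 be generators of the quadric with P1, P2
   complementary to P in H, and let proj be the projection of H onto P along P2.
   On a complement W of P1 :&: P2 in P1, the form (x, y) |-> beta(x, proj y),
   beta the polar form of the quadric, is alternating and nondegenerate, so
   dim W is even: dim (P1 :&: P2) = k (mod 2).  Two generators Pi_i, Pi_j
   meeting in a point thus force k to be odd, i.e. r <> 3 (mod 4). *)

From HB Require Import structures.
From mathcomp Require Import all_boot all_order all_algebra.
From mathcomp Require Import fingroup perm ring zify.
Set Implicit Arguments. Unset Strict Implicit. Unset Printing Implicit Defensive.
Import GRing.Theory.
Local Open Scope ring_scope.

Lemma odd_card_involution_fixpoint (T : finType) (g : T -> T) :
  odd #|T| -> involutive g -> exists x, g x = x.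
Proof.
move=> oddT gK; case: (pickP (fun x => g x == x)) => [x /eqP|nofix]; first by exists x.
pose A := [set x | (enum_rank x < enum_rank (g x))%N].
have gA : ~: A = g @: A.
  apply/setP=> x; rewrite !inE; apply/idP/imsetP => [|[y]]; last first.
    by rewrite inE => lt_y ->; rewrite gK -leqNgt ltnW.
  move=> ge_x; exists (g x); rewrite ?gK // inE gK ltn_neqAle leqNgt ge_x andbT.
  rewrite val_eqE (inj_eq enum_rank_inj); apply/eqP => ex.
  by have := nofix x; rewrite /= ex eqxx.
have := cardsC A; rewrite gA card_imset; last exact: inv_inj.
by move=> cardT; move: oddT; rewrite -cardT addnn odd_double.
Qed.

Lemma sum_antiinvolution (V : zmodType) (T : finType) (g : T -> T) (f : T -> V) :
  involutive g -> (forall x, g x = x -> f x = 0) -> (forall x, f (g x) = - f x) ->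
  \sum_x f x = 0.
Proof.
move=> gK f_fix f_g; pose P x := (enum_rank x < enum_rank (g x))%N.
rewrite (bigID P) /=.
have -> : \sum_(x | ~~ P x) f x = \sum_(x | P (g x)) f x.
  rewrite (bigID (fun x => g x == x)) /= big1 ?add0r => [|x /andP[_ /eqP/f_fix]//].
  apply: eq_bigl => x; rewrite /P gK -leqNgt leq_eqVlt val_eqE (inj_eq enum_rank_inj).
  by case: eqP => [->|_]; rewrite ?ltnn ?andbT.
rewrite [X in _ + X](reindex_inj (inv_inj gK)) /= [X in _ + X](eq_bigl P) => [|x].
  by rewrite -big_split /= big1 // => x _; rewrite f_g subrr.
by rewrite /P gK.
Qed.

Lemma det_alternate_odd (R : comNzRingType) m (M : 'M[R]_m) : odd m ->
  (forall i, M i i = 0) -> (forall i j, M j i = - M i j) -> \det M = 0.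
Proof.
(* Pairing s with s^-1 flips the sign of its term; the self-inverse s have a
   fixed point, hence a zero diagonal factor.  Unlike [det M = det (- M^T)],
   this also works in characteristic 2. *)
move=> odd_m M0 MN; pose t (s : 'S_m) := (-1) ^+ s * \prod_i M i (s i).
apply: (@sum_antiinvolution _ _ (fun s => s^-1)%g t) => [s|s ss|s]; first exact: invgK.
  have sK : involutive s by move=> i; rewrite -{1}ss permK.
  have [|i si] := odd_card_involution_fixpoint _ sK; first by rewrite card_ord.
  by rewrite /t (bigD1 i) //= si M0 mul0r mulr0.
rewrite /t odd_permV (reindex_inj (@perm_inj _ s)) /=.
under eq_bigr => i _ do rewrite permK MN.
rewrite prodrN cardT size_enum_ord -[(-1) ^+ m]signr_odd odd_m.
by rewrite mulN1r mulrN.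
Qed.

Lemma alternate_nondegenerate_dimv_even (F : fieldType) (vT : vectType F)
    (W : {vspace vT}) (phi : vT -> vT -> F) :
  (forall a x y z, phi (a *: x + y) z = a * phi x z + phi y z) ->
  (forall a x y z, phi z (a *: x + y) = a * phi z x + phi z y) ->
  (forall x, x \in W -> phi x x = 0) ->
  (forall y, y \in W -> (forall x, x \in W -> phi x y = 0) -> y = 0) ->
  ~~ odd (\dim W).
Proof.
move=> linl linr alt nondeg; apply/negP => odd_dW.
have phiDl x y z : phi (x + y) z = phi x z + phi y z.
  by have := linl 1 x y z; rewrite scale1r mul1r.
have phiDr x y z : phi z (x + y) = phi z x + phi z y.
  by have := linr 1 x y z; rewrite scale1r mul1r.
have phi0l z : phi 0 z = 0.
  by apply: (addrI (phi 0 z)); rewrite -phiDl !addr0.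
have phi0r z : phi z 0 = 0.
  by apply: (addrI (phi z 0)); rewrite -phiDr !addr0.
have phi_suml d (c : 'I_d -> F) (f : 'I_d -> vT) z :
    phi (\sum_i c i *: f i) z = \sum_i c i * phi (f i) z.
  apply: (big_ind2 (fun u w => phi u z = w)) => [|u1 u2 w1 w2 <- <-|i _].
  - exact: phi0l.
  - by rewrite phiDl.
  - by rewrite -[_ *: _]addr0 linl phi0l addr0.
have phi_sumr d (c : 'I_d -> F) (f : 'I_d -> vT) z :
    phi z (\sum_i c i *: f i) = \sum_i c i * phi z (f i).
  apply: (big_ind2 (fun u w => phi z u = w)) => [|u1 u2 w1 w2 <- <-|i _].
  - exact: phi0r.
  - by rewrite phiDr.
  - by rewrite -[_ *: _]addr0 linr phi0r addr0.
have skew x y : x \in W -> y \in W -> phi y x = - phi x y.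
  move=> xW yW; apply/eqP; rewrite -addr_eq0 addrC.
  by have := alt _ (memvD xW yW); rewrite phiDl !phiDr !alt // add0r addr0 => ->.
pose d := \dim W; pose e := vbasis W.
have eW (a : 'I_d) : e`_a \in W by apply/vbasis_mem/mem_nth; rewrite size_tuple.
pose G : 'M[F]_d := \matrix_(c, a) phi e`_a e`_c.
have /det0P [v nz_v vG] : \det G == 0.
  by apply/eqP/det_alternate_odd => // [i|i j]; rewrite !mxE; [exact: alt | exact: skew].
pose y := \sum_c v 0 c *: e`_c.
have y0 : y = 0.
  apply: nondeg => [|x xW]; first by apply: memv_suml => c _; apply: memvZ.
  rewrite (coord_vbasis xW) phi_suml; apply: big1 => a _.
  have := congr1 (fun M : 'M_(1, d) => M 0 a) vG; rewrite !mxE => vGa.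
  rewrite phi_sumr [X in _ * X](_ : _ = 0) ?mulr0 //; rewrite -[RHS]vGa.
  by apply: eq_bigr => c _; rewrite mxE.
case/negP: nz_v; apply/eqP/rowP => c; rewrite mxE.
by have /freeP := basis_free (vbasisP W); apply.
Qed.

Section HyperbolicForm.
Variables (F : finFieldType) (n m : nat) (b : m.-tuple 'rV[F]_n).
Local Notation vT := 'rV[F]_n.

(* [qcoord v j] is the coordinate [x_j] of [hypQ]; it is [0] for [j >= m]. *)
Definition qcoord (v : vT) (j : nat) : F := [seq coord b i v | i <- enum 'I_m]`_j.

Definition polarQ (u v : vT) : F :=
  \sum_(i < m | ~~ odd i) (qcoord u i * qcoord v i.+1 + qcoord v i * qcoord u i.+1).

Lemma qcoord_default v j : (m <= j)%N -> qcoord v j = 0.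
Proof. by move=> le_mj; apply: nth_default; rewrite size_map size_enum_ord. Qed.

Lemma qcoord_ord v (j : 'I_m) : qcoord v j = coord b j v.
Proof. by rewrite /qcoord (nth_map j) ?nth_ord_enum // size_enum_ord. Qed.

Lemma qcoordP a u v j : qcoord (a *: u + v) j = a * qcoord u j + qcoord v j.
Proof.
have [lt_jm | le_mj] := ltnP j m; last by rewrite !qcoord_default // mulr0 addr0.
have -> : j = Ordinal lt_jm by [].
by rewrite !qcoord_ord linearP.
Qed.

Lemma qcoordD u v j : qcoord (u + v) j = qcoord u j + qcoord v j.
Proof. by have := qcoordP 1 u v j; rewrite scale1r mul1r. Qed.

Lemma hypQE v : hypQ b v = \sum_(i < m | ~~ odd i) qcoord v i * qcoord v i.+1.
Proof. by []. Qed.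

Lemma hypQD u v : hypQ b (u + v) = hypQ b u + hypQ b v + polarQ u v.
Proof. by rewrite !hypQE -!big_split /=; apply: eq_bigr => i _; rewrite !qcoordD; ring. Qed.

Lemma polarQC u v : polarQ u v = polarQ v u.
Proof. by apply: eq_bigr => i _; rewrite addrC. Qed.

Lemma polarQ_linearl a x y z : polarQ (a *: x + y) z = a * polarQ x z + polarQ y z.
Proof.
rewrite /polarQ mulr_sumr -big_split /=; apply: eq_bigr => i _.
by rewrite !qcoordP; ring.
Qed.

Lemma polarQ_linearr a x y z : polarQ z (a *: x + y) = a * polarQ z x + polarQ z y.
Proof. by rewrite polarQC polarQ_linearl !(polarQC z). Qed.

Lemma polarQDl x y z : polarQ (x + y) z = polarQ x z + polarQ y z.
Proof. by have := polarQ_linearl 1 x y z; rewrite scale1r mul1r. Qed.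

Lemma polarQBr x y z : polarQ z (x - y) = polarQ z x - polarQ z y.
Proof. by rewrite addrC -scaleN1r polarQ_linearr mulN1r addrC. Qed.

Lemma polarQ_singular (U : {vspace vT}) x y :
  {in U, forall v, hypQ b v = 0} -> x \in U -> y \in U -> polarQ x y = 0.
Proof.
move=> singU xU yU; have := hypQD x y.
by rewrite !singU ?memvD // !add0r => <-.
Qed.

Lemma sum_even_delta (f : nat -> F) (h : nat) :
  \sum_(i < m | ~~ odd i) ((h == i :> nat)%:R * f i) =
  if (h < m)%N && ~~ odd h then f h else 0.
Proof.
rewrite (bigID (fun i : 'I_m => val i == h)) /= [X in _ + X]big1 ?addr0; last first.
  by move=> i /andP[_ /negPf]; rewrite eq_sym => ->; rewrite mul0r.
case: ifP => [/andP[lt_hm even_h] | not_even_h].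
  rewrite (big_pred1 (Ordinal lt_hm)) /= ?eqxx ?mul1r // => i /=.
  apply/andP/eqP => [[_ /eqP eq_ih] | ->]; first exact: val_inj.
  by rewrite /= even_h.
rewrite big_pred0 // => i; apply/negbTE/andP => -[odd_i /eqP eq_ih].
by move: not_even_h; rewrite -eq_ih ltn_ord odd_i.
Qed.

Lemma qcoord_basis h j : free b -> (h < m)%N -> qcoord b`_h j = (h == j)%:R.
Proof.
move=> free_b lt_hm; have [lt_jm | le_mj] := ltnP j m; last first.
  rewrite qcoord_default //; case: eqP => // eq_hj.
  by move: lt_hm; rewrite eq_hj ltnNge le_mj.
have -> : j = Ordinal lt_jm by [].
have -> : h = Ordinal lt_hm by [].
by rewrite qcoord_ord coord_free.
Qed.

Lemma polarQ_basis_even h v : free b ->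
  (h < m)%N -> ~~ odd h -> polarQ b`_h v = qcoord v h.+1.
Proof.
move=> free_b lt_hm even_h; rewrite /polarQ.
rewrite (eq_bigr (fun i : 'I_m => (h == i)%:R * qcoord v i.+1)) => [|i even_i].
  by rewrite (sum_even_delta (fun k => qcoord v k.+1)) lt_hm even_h.
rewrite !qcoord_basis // [h == i.+1]negbTE ?mulr0 ?addr0 //.
by apply/eqP => eq_hi; rewrite eq_hi /= even_i in even_h.
Qed.

Lemma polarQ_basis_odd h v : free b ->
  (h < m)%N -> odd h -> polarQ b`_h v = qcoord v h.-1.
Proof.
move=> free_b; case: h => // h lt_hm /= even_h; rewrite /polarQ.
rewrite (eq_bigr (fun i : 'I_m => (h == i)%:R * qcoord v i)) => [|i even_i].
  by rewrite (sum_even_delta (qcoord v)) (ltnW lt_hm) even_h.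
rewrite !qcoord_basis // eqSS [_ == i :> nat]negbTE ?mul0r ?add0r 1?mulrC //.
by apply/eqP => eq_hi; rewrite -eq_hi /= even_h in even_i.
Qed.

Lemma polarQ_nondegenerate (H : {vspace vT}) v :
  ~~ odd m -> basis_of H b -> v \in H -> {in H, forall h, polarQ h v = 0} -> v = 0.
Proof.
move=> even_m Hb vH polar_v0; have free_b := basis_free Hb.
have bH h : (h < m)%N -> b`_h \in H.
  by move=> lt_hm; apply: (basis_mem Hb); rewrite mem_nth ?size_tuple.
have qcoord_v0 j : (j < m)%N -> qcoord v j = 0.
  move=> lt_jm; have [odd_j | even_j] := boolP (odd j).
    case: j odd_j lt_jm => // k /= even_k lt_km.
    by rewrite -(polarQ_basis_even v free_b _ even_k) ?polar_v0 ?bH // ltnW.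
  have lt_j1m : (j.+1 < m)%N.
    by rewrite ltn_neqAle lt_jm andbT; apply: contraNneq even_m => <-.
  by rewrite -(polarQ_basis_odd v free_b lt_j1m) ?polar_v0 ?bH.
rewrite (coord_basis Hb vH); apply: big1 => i _.
by rewrite -qcoord_ord qcoord_v0 ?scale0r.
Qed.

End HyperbolicForm.

Section Generators.
Variables (F : finFieldType) (n m : nat) (b : m.-tuple 'rV[F]_n).
Variables (H P P1 P2 : {vspace 'rV[F]_n}).
Hypotheses (even_m : ~~ odd m) (Hb : basis_of H b) (dimH : \dim H = m).
Hypotheses (genP : is_generator H b P) (genP1 : is_generator H b P1)
  (genP2 : is_generator H b P2).
Hypotheses (P1P : (P1 :&: P = 0)%VS) (P2P : (P2 :&: P = 0)%VS).

Lemma generator_addv_compl U : is_generator H b U -> (U :&: P = 0)%VS -> (P + U)%VS = H.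
Proof.
case: genP => [sPH [dimP _]] [sUH [dimU _]] UP; apply/eqP.
rewrite eqEdim subv_add sPH sUH dimv_disjoint_sum; last by rewrite capvC.
by rewrite dimP dimU dimH addnn -{1}(odd_double_half m) (negbTE even_m) /= leqnn.
Qed.

Local Notation proj := (daddv_pi P P2).
Local Notation coproj := (daddv_pi P2 P).

Lemma proj_add_coproj y : y \in H -> proj y + coproj y = y.
Proof.
move=> yH; apply: daddv_pi_add; first by rewrite capvC.
by rewrite generator_addv_compl.
Qed.

Lemma polarQ_proj_alternate x : x \in P1 -> polarQ b x (proj x) = 0.
Proof.
case: genP => _ [_ singP]; case: genP1 => sP1H [_ singP1]; case: genP2 => _ [_ singP2].
move=> xP1; have projP : proj x \in P := memv_pi _ _ _.
have coprojP2 : coproj x \in P2 := memv_pi _ _ _.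
have xE := proj_add_coproj (subvP sP1H _ xP1).
rewrite -{1}xE polarQDl (polarQ_singular singP projP projP) add0r.
have := hypQD b (coproj x) (proj x).
by rewrite addrC xE singP1 // singP2 // singP // !add0r.
Qed.

Lemma polarQ_proj_nondegenerate y : y \in (P1 :\: P2)%VS ->
  {in (P1 :\: P2)%VS, forall x, polarQ b x (proj y) = 0} -> y = 0.
Proof.
case: genP => sPH [_ singP]; case: genP1 => sP1H [_ singP1]; case: genP2 => _ [_ singP2].
move=> yW polar_y0; have yP1 : y \in P1 := subvP (diffvSl P1 P2) y yW.
have yE := proj_add_coproj (subvP sP1H _ yP1).
have proj_y0 : proj y = 0.
  apply: (polarQ_nondegenerate even_m Hb (subvP sPH _ (memv_pi _ _ _))) => h.
  rewrite -(generator_addv_compl genP1 P1P) => /memv_addP [p pP [x xP1 ->]].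
  rewrite polarQDl (polarQ_singular singP pP (memv_pi _ _ _)) add0r.
  move: xP1; rewrite -(addv_diff_cap P1 P2).
  move=> /memv_addP [w wW [c /memv_capP[cP1 cP2] ->]].
  rewrite polarQDl polar_y0 // add0r.
  have -> : proj y = y - coproj y by rewrite -{2}yE addrK.
  rewrite polarQBr (polarQ_singular singP1 cP1 yP1).
  by rewrite (polarQ_singular singP2 cP2 (memv_pi _ _ _)) subrr.
apply/eqP; rewrite -memv0 -(capv_diff P1 P2); apply/memv_capP; split => //.
by rewrite -yE proj_y0 add0r memv_pi.
Qed.

Lemma generators_cap_parity : odd (\dim (P1 :&: P2)) = odd m./2.
Proof.
have even_W : ~~ odd (\dim (P1 :\: P2)).
  apply: (@alternate_nondegenerate_dimv_even _ _ _ (fun x y => polarQ b x (proj y))).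
  - by move=> a x y z; apply: polarQ_linearl.
  - by move=> a x y z; rewrite linearP; apply: polarQ_linearr.
  - by move=> x /(subvP (diffvSl P1 P2)); apply: polarQ_proj_alternate.
  - exact: polarQ_proj_nondegenerate.
case: genP1 => _ [dimP1 _].
by rewrite -dimP1 -(dimv_cap_compl P1 P2) oddD (negbTE even_W) addbF.
Qed.

End Generators.

Section HyperbolicAvsp.
Variables (F : finFieldType) (r N : nat) (H Pi : {vspace 'rV[F]_(r.+2)}).
Variables (b : r.+1.-tuple 'rV[F]_(r.+2)) (S : 'I_N -> {vspace 'rV[F]_(r.+2)}).
Hypotheses (odd_r : odd r) (avsp : hyperbolic_avsp H b Pi S).

Lemma avsp_cap_sub i j : i != j -> (S i :&: S j <= (S i :&: H) :&: (S j :&: H))%VS.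
Proof.
have [_ [_ [_ [_ [_ [_ [part _]]]]]]] := avsp.
move=> neq_ij; apply/subvP => v /memv_capP [vSi vSj].
have [vH | vNH] := boolP (v \in H); first by rewrite !memv_cap vSi vSj vH.
have [l [_ uniq_l]] := part v vNH.
by move: neq_ij; rewrite -(uniq_l i vSi) -(uniq_l j vSj) eqxx.
Qed.

Lemma avsp_cap_neq0 i j : (0 < \dim (S i :&: S j))%N.
Proof.
have [_ [_ [_ [_ [_ [_ [_ [shape _]]]]]]]] := avsp.
have := dimv_sum_cap (S i) (S j); have := dimvS (subvf (S i + S j)%VS).
rewrite dimvf /dim /= mul1n (shape i).1 (shape j).1.
have := odd_double_half r.+1; rewrite /= odd_r /=; lia.
Qed.

Lemma hyperbolic_avsp_cap_dim i j : i != j ->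
  \dim (S i :&: S j) = 1%N /\ \dim ((S i :&: H) :&: (S j :&: H)) = 1%N.
Proof.
have [_ [_ [_ [_ [_ [_ [_ [_ cond]]]]]]]] := avsp.
move=> neq_ij; have [le1_S [le1_Pi _]] := cond i j neq_ij.
have le_S_Pi := dimvS (avsp_cap_sub neq_ij).
by split; apply/eqP; rewrite eqn_leq ?le1_S ?le1_Pi (leq_trans (avsp_cap_neq0 i j)).
Qed.

Lemma hyperbolic_avsp_mod4 : (1 < N)%N -> (r %% 4 <> 3)%N.
Proof.
have [_ [_ [Hb [genPi [_ [_ [_ [shape _]]]]]]]] := avsp.
move=> lt1N r_mod4; pose i0 := Ordinal (ltnW lt1N); pose i1 := Ordinal lt1N.
have [_ [gen0 disj0]] := shape i0; have [_ [gen1 disj1]] := shape i1.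
have even_r1 : ~~ odd r.+1 by rewrite /= odd_r.
have := generators_cap_parity even_r1 Hb avsp.2.1 genPi gen0 gen1 disj0 disj1.
have [_ ->] := hyperbolic_avsp_cap_dim (isT : i0 != i1).
have -> : r.+1 = (r %/ 4).+1.*2.*2 by rewrite {1}(divn_eq r 4) r_mod4 -!mul2n; lia.
by rewrite doubleK odd_double.
Qed.
End HyperbolicAvsp.

Theorem mainTheorem6 (F : finFieldType) (r : nat)
    (H : {vspace 'rV[F]_(r.+2)}) (b : r.+1.-tuple 'rV[F]_(r.+2))
    (Pi : {vspace 'rV[F]_(r.+2)})
    (S : 'I_(#|F| ^ (r.+1)./2) -> {vspace 'rV[F]_(r.+2)}) :
  odd r ->
  hyperbolic_avsp H b Pi S ->
  (forall i j, i != j ->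
     \dim (S i :&: S j)%VS = 1%N /\
     \dim ((S i :&: H) :&: (S j :&: H))%VS = 1%N)
  /\ (r %% 4 <> 3)%N.
Proof.
move=> odd_r avsp.
have lt1N : (1 < #|F| ^ (r.+1)./2)%N.
  by rewrite -[1%N](expn0 #|F|) ltn_exp2l ?card_finNzRing_gt1 // half_gt0 ltnS odd_gt0.
split; first exact: hyperbolic_avsp_cap_dim odd_r avsp.
exact: hyperbolic_avsp_mod4 odd_r avsp lt1N.
Qed.
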